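(* Let $F(x_1,\dots,x_n)=f_1\wedge\dots\wedge f_m$ and $G(y_1,\dots,y_{n'})=g_1\wedge\dots\wedge g_{m'}$ be CNF formulas such that $F\le^{\oplus}G$. If there exists a $\mathsf{Res}[\oplus]$ refutation of $G$ with $s$ steps, then there exists a $\mathsf{Res}[\oplus]$ refutation of $F$ with $2nm'+s$ steps. (In particular, $\mathsf{Res}[\oplus]$ is closed under simple parity reductions.)
   Context: Simple parity reduction: $F\le^{\oplus}G$ if there is an $\mathbb{F}_2$-linear map $\mathsf{redu}:\{0,1\}^n\to\{0,1\}^{n'}$ (each output bit is the XOR of a subset of input bits; $g\circ\mathsf{redu}$ denotes substituting each $y_i$ by the corresponding linear form) such that for every clause $g$ of $G$, one of: $g\circ\mathsf{redu}\equiv\mathsf{True}$; $g\circ\mathsf{redu}$ equals some clause of $F$; or $g$ is a width-1 clause (single literal) and $g\circ\mathsf{redu}$ is the XOR (sum over $\mathbb{F}_2$ of the corresponding linear equations) of a subset of clauses of $F$, which are then width-1. $\mathsf{Res}[\oplus]$ (resolution over linear equations modulo 2, Itsykson–Sokolov): lines are linear clauses, i.e., disjunctions of linear equations over $\mathbb{F}_2$; a refutation of a CNF is a sequence of linear clauses ending with the empty clause, where each line is an initial clause (a literal $x$ read as $x=1$, $\neg x$ as $x=0$), or is derived by the resolution rule (from $C\vee(f=0)$ and $D\vee(f=1)$ derive $C\vee D$), or by weakening (derive any linear clause semantically implied by an earlier line). The number of steps is the number of lines. *)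

From mathcomp Require Import all_boot.
Set Implicit Arguments.
Unset Strict Implicit.
Unset Printing Implicit Defensive.

(* A literal over variables x_0..x_{n-1}: (i, true) is x_i, (i, false) is ~x_i. *)
Definition literal (n : nat) := ('I_n * bool)%type.
Definition clause (n : nat) := seq (literal n).
Definition cnf (n : nat) := seq (clause n).

(* A linear equation over F_2: (S, b) stands for  (XOR_{i in S} x_i) = b. *)
Definition equation (n : nat) := ({set 'I_n} * bool)%type.
Definition lclause (n : nat) := seq (equation n).

Definition assignment (n : nat) := 'I_n -> bool.

Definition eval_eq n (a : assignment n) (e : equation n) : bool :=
  (\big[addb/false]_(i in e.1) a i) == e.2.

Definition sat_lc n (a : assignment n) (C : lclause n) : bool :=
  has (eval_eq a) C.

Definition lit_eq n (l : literal n) : equation n := ([set l.1], l.2).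
Definition clause_lc n (c : clause n) : lclause n := map (@lit_eq n) c.

Definition sum_eqs n (es : seq (equation n)) : equation n :=
  ([set i | odd (count (fun e : equation n => i \in e.1) es)],
   foldr addb false (map snd es)).

(* The linear map redu : {0,1}^n -> {0,1}^n' given by y_j = XOR_{i in redu j} x_i.
   Substitution of y_j by its linear form in an equation over y. *)
Definition subst_eq n n' (redu : 'I_n' -> {set 'I_n}) (e : equation n') : equation n :=
  ([set i | odd #|[set j in e.1 | i \in redu j]|], e.2).
Definition subst_lc n n' (redu : 'I_n' -> {set 'I_n}) (C : lclause n') : lclause n :=
  map (subst_eq redu) C.

Definition clause_comp n n' (redu : 'I_n' -> {set 'I_n}) (g : clause n') : lclause n :=
  subst_lc redu (clause_lc g).

Definition parity_red_by n n' (F : cnf n) (G : cnf n') (redu : 'I_n' -> {set 'I_n}) : Prop :=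
  forall g, g \in G ->
    (forall a : assignment n, sat_lc a (clause_comp redu g))
    \/ (exists2 c, c \in F & clause_comp redu g =i clause_lc c)
    \/ (size g = 1 /\
        exists cs : seq (clause n),
          [/\ uniq cs, {subset cs <= F}, all (fun c => size c == 1) cs &
              clause_comp redu g = [:: sum_eqs (flatten (map (@clause_lc n) cs))]]).

Definition parity_le n n' (F : cnf n) (G : cnf n') : Prop :=
  exists redu : 'I_n' -> {set 'I_n}, parity_red_by F G redu.

Definition valid_line n (F : cnf n) (pi : seq (lclause n)) (k : nat) : Prop :=
  let L := nth [::] pi k in
  (exists2 c, c \in F & L = clause_lc c)
  \/ (exists i j, [/\ i < k, j < k &
        exists (f : {set 'I_n}) (C D : lclause n),
          [/\ perm_eq (nth [::] pi i) ((f, false) :: C),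
              perm_eq (nth [::] pi j) ((f, true) :: D) &
              L = C ++ D]])
  \/ (exists i, i < k /\
        forall a : assignment n, sat_lc a (nth [::] pi i) -> sat_lc a L).

Definition refutation n (F : cnf n) (pi : seq (lclause n)) : Prop :=
  [/\ 0 < size pi,
      (forall k, k < size pi -> valid_line F pi k) &
      last [::] pi = [::]].

From mathcomp Require Import all_boot.
From mathcomp Require Import zify.
Set Implicit Arguments. Unset Strict Implicit. Unset Printing Implicit Defensive.

(* Substituting the linear forms of redu into a Res(+) refutation of G gives a
   Res(+) refutation of F, except that each initial clause g of G turns into
   g o redu, which must first be derived from F.  This costs one line when
   g o redu is a clause of F or a tautology.  Otherwise g o redu is a single
   equation t, the sum e_1 + ... + e_k of unit clauses e_i of F, and it takes
   2k lines: write e_1, weaken it to ~e_2 \/ ... \/ ~e_k \/ t, then for each i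
   write e_i and resolve ~e_i away.  Unless F contains two complementary unit
   clauses (and then has a 3-line refutation), the e_i are on distinct
   variables, so k <= n. *)

Lemma big_addb_odd (T : finType) (A : {pred T}) (P : pred T) :
  \big[addb/false]_(i in A) P i = odd #|[set i in A | P i]|.
Proof.
rewrite -sum1_card (big_morph odd oddD (erefl (odd 0))) big_mkcond [RHS]big_mkcond.
by apply: eq_bigr => i _; rewrite inE; case: (i \in A); case: (P i).
Qed.

Section Parity.
Variable n : nat.
Implicit Types (a : assignment n) (A B : {set 'I_n}) (e : equation n).

Definition parity a A : bool := \big[addb/false]_(i in A) a i.

Lemma eval_eqE a e : eval_eq a e = (parity a e.1 == e.2).
Proof. by []. Qed.

Lemma parityE a A : parity a A = \big[addb/false]_i ((i \in A) && a i).
Proof. by rewrite /parity big_mkcond; apply: eq_bigr => i _; case: (i \in A). Qed.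

Lemma parity_addb a A B :
  parity a [set i | (i \in A) (+) (i \in B)] = parity a A (+) parity a B.
Proof. by rewrite !parityE -big_split; apply: eq_bigr => i _; rewrite inE andb_addl. Qed.

Lemma sum_eqs_cons e es :
  sum_eqs (e :: es) =
  ([set i | (i \in e.1) (+) (i \in (sum_eqs es).1)], e.2 (+) (sum_eqs es).2).
Proof. by congr pair; apply/setP => i; rewrite !inE /= oddD oddb. Qed.

Lemma eval_sum_eqs a es : all (eval_eq a) es -> eval_eq a (sum_eqs es).
Proof.
elim: es => [_|e es IH /andP [He /IH]]; first by rewrite eval_eqE /parity big1 // => i; rewrite inE.
rewrite sum_eqs_cons !eval_eqE parity_addb => /eqP->.
by move: He; rewrite eval_eqE => /eqP->.
Qed.

End Parity.

Definition redu_map n n' (redu : 'I_n' -> {set 'I_n}) (a : assignment n) : assignment n' :=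
  fun j => parity a (redu j).

Lemma eval_subst_eq n n' (redu : 'I_n' -> {set 'I_n}) a (e : equation n') :
  eval_eq a (subst_eq redu e) = eval_eq (redu_map redu a) e.
Proof.
rewrite !eval_eqE /=; congr (_ == _).
rewrite parityE /parity /redu_map.
under [RHS]eq_bigr => j _ do rewrite parityE.
rewrite exchange_big; apply: eq_bigr => i _ /=.
by rewrite -big_distrl /= big_addb_odd inE.
Qed.

Lemma sat_subst_lc n n' (redu : 'I_n' -> {set 'I_n}) a (C : lclause n') :
  sat_lc a (subst_lc redu C) = sat_lc (redu_map redu a) C.
Proof. by rewrite /sat_lc has_map; apply: eq_has => e; rewrite /= eval_subst_eq. Qed.

Definition neg_eq n (e : equation n) : equation n := (e.1, ~~ e.2).

Lemma eval_neg_eq n a (e : equation n) : eval_eq a (neg_eq e) = ~~ eval_eq a e.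
Proof. by case: e => S b; rewrite !eval_eqE /=; case: (parity a S); case: b. Qed.

Lemma sat_resolvent n a (f : {set 'I_n}) (C D L1 L2 : lclause n) :
  perm_eq L1 ((f, false) :: C) -> perm_eq L2 ((f, true) :: D) ->
  sat_lc a L1 -> sat_lc a L2 -> sat_lc a (C ++ D).
Proof.
rewrite /sat_lc => /(perm_has (eval_eq a))-> /(perm_has (eval_eq a))->.
rewrite /= has_cat !eval_eqE /=.
by case: (parity a f); case: (has _ C); case: (has _ D).
Qed.

Lemma sat_negs_or_sum_eqs n a (e : equation n) es :
  eval_eq a e -> sat_lc a (map (@neg_eq n) es ++ [:: sum_eqs (e :: es)]).
Proof.
move=> ae; rewrite /sat_lc has_cat /= orbF; case: hasP => //= negs.
apply: eval_sum_eqs; rewrite /= ae; apply/allP => x xes; apply/negPn/negP => nx.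
by apply: negs; exists (neg_eq x); rewrite ?map_f ?eval_neg_eq.
Qed.

Section Derivations.
Variables (n : nat) (F : cnf n).
Implicit Types (P Q : seq (lclause n)) (L R : lclause n).

Definition derivation P := forall k, k < size P -> valid_line F P k.

Lemma derivation_nil : derivation [::].
Proof. by []. Qed.

Definition implied_by_line P L :=
  exists2 p, p < size P & forall a, sat_lc a (nth [::] P p) -> sat_lc a L.

Lemma valid_line_catr P Q k : k < size P -> valid_line F P k -> valid_line F (P ++ Q) k.
Proof.
move=> kP; have E i : i <= k -> nth [::] (P ++ Q) i = nth [::] P i.
  by move=> ik; rewrite nth_cat (leq_ltn_trans ik kP).
rewrite /valid_line E //.
case=> [H|[[i [j [ik jk H]]]|[i [ik H]]]].
- by left.
- by right; left; exists i, j; rewrite E ?(ltnW ik) // E ?(ltnW jk).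
- by right; right; exists i; rewrite E ?(ltnW ik).
Qed.

Lemma valid_line_catl P Q k : valid_line F Q k -> valid_line F (P ++ Q) (size P + k).
Proof.
have E i : nth [::] (P ++ Q) (size P + i) = nth [::] Q i.
  by rewrite nth_cat ltnNge leq_addr addKn.
rewrite /valid_line E.
case=> [H|[[i [j [ik jk H]]]|[i [ik H]]]].
- by left.
- by right; left; exists (size P + i), (size P + j); rewrite !ltn_add2l !E.
- by right; right; exists (size P + i); rewrite ltn_add2l E.
Qed.

Lemma implied_by_line_catr P Q L : implied_by_line P L -> implied_by_line (P ++ Q) L.
Proof. by case=> p pP pL; exists p; rewrite ?size_cat ?ltn_addr // nth_cat pP. Qed.

Lemma implied_by_line_catl P Q L : implied_by_line Q L -> implied_by_line (P ++ Q) L.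
Proof.
case=> p pQ pL; exists (size P + p); first by rewrite size_cat ltn_add2l.
by rewrite nth_cat ltnNge leq_addr addKn.
Qed.

Lemma derivation_cat P Q : derivation P -> derivation Q -> derivation (P ++ Q).
Proof.
move=> dP dQ k; rewrite size_cat => kPQ.
have [kP|Pk] := ltnP k (size P); first exact: valid_line_catr (dP k kP).
rewrite -(subnKC Pk); apply/valid_line_catl/dQ.
by rewrite -(ltn_add2l (size P)) subnKC.
Qed.

Lemma derivation_rcons P L :
  derivation P -> valid_line F (rcons P L) (size P) -> derivation (rcons P L).
Proof.
move=> dP vL k; rewrite size_rcons ltnS leq_eqVlt => /orP [/eqP->//|kP].
by rewrite -cats1; apply/valid_line_catr/dP.
Qed.

Lemma derivation_rcons_axiom P c : c \in F -> derivation P -> derivation (rcons P (clause_lc c)).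
Proof.
by move=> cF dP; apply: derivation_rcons => //; left; exists c; rewrite // nth_rcons ltnn eqxx.
Qed.

Lemma derivation_rcons_weaken P p L : derivation P -> p < size P ->
  (forall a, sat_lc a (nth [::] P p) -> sat_lc a L) -> derivation (rcons P L).
Proof.
move=> dP pP pL; apply: derivation_rcons => //; right; right; exists p.
by rewrite !nth_rcons pP ltnn eqxx.
Qed.

Lemma derivation_rcons_resolve_unit P i j e R : derivation P -> i < size P -> j < size P ->
  nth [::] P i = [:: e] -> nth [::] P j = neg_eq e :: R -> derivation (rcons P R).
Proof.
move=> dP iP jP Pi Pj; apply: derivation_rcons => //; right; left.
case: e Pi Pj => f [] Pi Pj.
- exists j, i; split => //; exists f, R, [::].
  by rewrite !nth_rcons iP jP ltnn eqxx Pi Pj cats0.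
- exists i, j; split => //; exists f, [::], R.
  by rewrite !nth_rcons iP jP ltnn eqxx Pi Pj.
Qed.

Lemma derivation_cut_units P (ls : seq (literal n)) R :
  {subset [seq [:: l] | l <- ls] <= F} ->
  derivation (rcons P (map (@neg_eq n) (map (@lit_eq n) ls) ++ R)) ->
  exists2 Q, derivation (rcons Q R) & size Q = size P + 2 * size ls.
Proof.
elim: ls P => [|l ls IH] P lsF dP; first by exists P; rewrite ?addn0.
move: dP => /=; set L := _ ++ R => dP.
have lF : [:: l] \in F by apply: lsF; rewrite mem_head.
have dPl := derivation_rcons_axiom lF dP.
have dPlL : derivation (rcons (rcons (rcons P (neg_eq (lit_eq l) :: L)) [:: lit_eq l]) L).
  apply: (derivation_rcons_resolve_unit (i := (size P).+1) (j := size P) (e := lit_eq l))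
    dPl _ _ _ _; by rewrite ?nth_rcons !size_rcons ?ltnSn ?ltnn ?eqxx.
have [|Q dQ sQ] := IH _ _ dPlL.
  by move=> c cls; apply: lsF; rewrite inE cls orbT.
by exists Q; rewrite // sQ !size_rcons /= mulnS !addnS.
Qed.

Lemma derivation_unit_sum (l : literal n) ls :
  {subset [seq [:: l'] | l' <- l :: ls] <= F} ->
  exists2 Q, derivation (rcons Q [:: sum_eqs (map (@lit_eq n) (l :: ls))])
           & size Q = (2 * size ls).+1.
Proof.
move=> lsF.
have lF : [:: l] \in F by apply: lsF; rewrite mem_head.
have d1 := derivation_rcons_axiom lF derivation_nil.
have d2 : derivation [:: clause_lc [:: l];
    map (@neg_eq n) (map (@lit_eq n) ls) ++ [:: sum_eqs (map (@lit_eq n) (l :: ls))]].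
  apply: (derivation_rcons_weaken (p := 0)) d1 _ _ => // a.
  by rewrite /sat_lc /= orbF; apply: sat_negs_or_sum_eqs.
have [|Q dQ sQ] := derivation_cut_units (P := [:: clause_lc [:: l]]) _ d2.
  by move=> c cls; apply: lsF; rewrite inE cls orbT.
by exists Q.
Qed.

Lemma refutation_nil_clause : [::] \in F -> refutation F [:: [::]].
Proof. by move=> nilF; split => //; exact: (derivation_rcons_axiom nilF derivation_nil). Qed.

Lemma refutation_complementary_units (v : 'I_n) b :
  [:: (v, b)] \in F -> [:: (v, ~~ b)] \in F ->
  refutation F [:: clause_lc [:: (v, b)]; clause_lc [:: (v, ~~ b)]; [::]].
Proof.
move=> posF negF; split => //.
have d2 := derivation_rcons_axiom negF (derivation_rcons_axiom posF derivation_nil).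
exact: (derivation_rcons_resolve_unit (i := 0) (j := 1) (e := lit_eq (v, b))) d2 _ _ _ _.
Qed.

Lemma refutation_unsat pi a :
  refutation F pi -> (forall c, c \in F -> sat_lc a (clause_lc c)) -> False.
Proof.
case=> pi_gt0 dpi last_nil satF.
have sat_line k : k < size pi -> sat_lc a (nth [::] pi k).
  elim/ltn_ind: k => k IH kpi.
  have sat_before i : i < k -> sat_lc a (nth [::] pi i).
    by move=> ik; apply: IH ik (ltn_trans ik kpi).
  case: (dpi k kpi) => [[c cF ->]|[[i [j [ik jk [f [C [D [Pi Pj ->]]]]]]]|[i [ik iL]]]].
  - exact: satF.
  - exact: sat_resolvent Pi Pj (sat_before i ik) (sat_before j jk).
  - exact: iL (sat_before i ik).
by have := sat_line (size pi).-1; rewrite prednK // leqnn nth_last last_nil => /(_ isT).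
Qed.

Lemma refutation_size_cnf_gt0 pi : refutation F pi -> 0 < size F.
Proof.
move=> refF; rewrite lt0n; apply/negP => /eqP/size0nil F0.
by apply: (refutation_unsat (a := fun _ => false) refF) => c; rewrite F0.
Qed.

End Derivations.

Lemma unit_seqs_flatten (T : Type) (cs : seq (seq T)) :
  all (fun c => size c == 1) cs -> cs = [seq [:: x] | x <- flatten cs].
Proof. by elim: cs => [|[|x [|y c]] cs IH] //= /IH {1}->. Qed.

Lemma size_consistent_literals n (ls : seq (literal n)) :
  uniq ls -> (forall v b, (v, b) \in ls -> (v, ~~ b) \in ls -> False) -> size ls <= n.
Proof.
move=> uls consistent.
have inj_var : {in ls &, injective (fun l : literal n => l.1)}.
  move=> [v b] [v' b'] lin l'in /= vv'; subst v'.
  case: (b =P b') => [->//|nbb']; case: (consistent v b) => //.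
  by case: b b' nbb' l'in {lin} => [] [].
rewrite -(size_map (fun l : literal n => l.1)) -[n in _ <= n]size_enum_ord.
apply: uniq_leq_size; first by rewrite map_inj_in_uniq.
by move=> v; rewrite mem_enum.
Qed.

Section ParityReduction.
Variables (n n' : nat) (F : cnf n) (G : cnf n') (redu : 'I_n' -> {set 'I_n}).
Hypothesis redF : parity_red_by F G redu.

Lemma parity_red_cases g : g \in G ->
  [\/ forall a, sat_lc a (clause_comp redu g),
      exists2 c, c \in F & clause_comp redu g =i clause_lc c |
      exists2 ls : seq (literal n), uniq ls /\ {subset [seq [:: l] | l <- ls] <= F}
        & clause_comp redu g = [:: sum_eqs (map (@lit_eq n) ls)]].
Proof.
move=> gG; case: (redF gG) => [taut|[img|[_ [cs [ucs csF units ->]]]]];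
  [exact: Or31 | exact: Or32 | apply: Or33].
exists (flatten cs); last by rewrite map_flatten.
rewrite (unit_seqs_flatten units) in ucs csF.
have inj_unit : injective (fun l : literal n => [:: l]) by move=> x y [].
by rewrite (map_inj_uniq inj_unit) in ucs.
Qed.

Lemma sat_parity_red a : (forall c, c \in F -> sat_lc a (clause_lc c)) ->
  forall g, g \in G -> sat_lc (redu_map redu a) (clause_lc g).
Proof.
move=> satF g gG; rewrite -sat_subst_lc -/(clause_comp redu g).
case: (parity_red_cases gG) => [taut|[c cF img]|[ls [_ lsF] ->]]; first exact: taut.
- by rewrite /sat_lc (eq_has_r img); apply: satF.
- rewrite /sat_lc /= orbF; apply/eval_sum_eqs/allP => _ /mapP [l lls ->].
  by have := satF _ (lsF _ (map_f _ lls)); rewrite /sat_lc /= orbF.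
Qed.

Lemma valid_line_subst piG k : k < size piG -> valid_line G piG k ->
  (exists2 g, g \in G & nth [::] piG k = clause_lc g) \/
  valid_line F (map (subst_lc redu) piG) k.
Proof.
move=> kpi; have E i : i <= k ->
    nth [::] (map (subst_lc redu) piG) i = subst_lc redu (nth [::] piG i).
  by move=> ik; rewrite (nth_map [::]) // (leq_ltn_trans ik kpi).
rewrite /valid_line E //.
case=> [init|[[i [j [ik jk [f [C [D [Pi Pj ->]]]]]]]|[i [ik iL]]]]; [by left | right..].
- right; left; exists i, j; split => //.
  exists (subst_eq redu (f, false)).1, (subst_lc redu C), (subst_lc redu D).
  by rewrite !E ?(ltnW ik) ?(ltnW jk) // /subst_lc map_cat (perm_map _ Pi) (perm_map _ Pj).
- right; right; exists i; split => // a.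
  by rewrite E ?(ltnW ik) // !sat_subst_lc; exact: iL.
Qed.

Lemma refutation_subst P piG : derivation F P ->
  (forall g, g \in G -> implied_by_line P (clause_comp redu g)) ->
  refutation G piG -> refutation F (P ++ map (subst_lc redu) piG).
Proof.
move=> dP implP [piG_gt0 dpiG last_nil]; split.
- by rewrite size_cat size_map addn_gt0 piG_gt0 orbT.
- move=> k; rewrite size_cat size_map => kPpi.
  have [kP|Pk] := ltnP k (size P); first exact: valid_line_catr (dP k kP).
  rewrite -(subnKC Pk) in kPpi *; move: (k - size P) kPpi => k'; rewrite ltn_add2l => k'pi.
  case: (valid_line_subst k'pi (dpiG k' k'pi)) => [[g gG init]|]; last exact: valid_line_catl.
  have [p pP pL] := implP g gG; right; right; exists p; split; first exact: ltn_addr.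
  rewrite nth_cat pP nth_cat ltnNge leq_addr addKn (nth_map [::]) // init.
  exact: pL.
- case: piG piG_gt0 last_nil {dpiG} => [//|l piG] _ /= last_nil.
  by rewrite last_cat /= last_map last_nil.
Qed.

Lemma parity_red_refutation_size_gt0 piG : refutation G piG -> 0 < size F.
Proof.
move=> refG; rewrite lt0n; apply/negP => /eqP/size0nil F0.
apply: (refutation_unsat refG (sat_parity_red (a := fun _ => false) _)) => c.
by rewrite F0.
Qed.

Variable c0 : clause n.
Hypotheses (c0F : c0 \in F) (n_gt0 : 0 < n)
  (units_consistent : forall v b, [:: (v, b)] \in F -> [:: (v, ~~ b)] \in F -> False).

Lemma derivation_implying_reduct g : g \in G ->
  exists B, [/\ derivation F B, size B <= 2 * n & implied_by_line B (clause_comp redu g)].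
Proof.
move=> gG.
have from_axiom c L : c \in F -> (forall a, sat_lc a (clause_lc c) -> sat_lc a L) ->
    exists B, [/\ derivation F B, size B <= 2 * n & implied_by_line B L].
  move=> cF cL; exists [:: clause_lc c]; split.
  - exact: derivation_rcons_axiom cF (derivation_nil F).
  - by rewrite /= muln_gt0.
  - by exists 0.
case: (parity_red_cases gG) => [taut|[c cF img]|[[|l ls] [uls lsF] ->]].
  (* A weakening needs a premise, hence the axiom c0 in front of a tautology. *)
- by apply: (from_axiom c0) => // a _; apply: taut.
- by apply: (from_axiom c) => // a; rewrite /sat_lc (eq_has_r img).
- by apply: (from_axiom c0) => // a _; rewrite /sat_lc /= orbF; apply: eval_sum_eqs.
- have [Q dQ sQ] := derivation_unit_sum lsF.
  exists (rcons Q [:: sum_eqs (map (@lit_eq n) (l :: ls))]); split => //.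
  + have : size (l :: ls) <= n.
      apply: size_consistent_literals uls _ => v b vb vnb.
      exact: units_consistent (lsF _ (map_f _ vb)) (lsF _ (map_f _ vnb)).
    by rewrite size_rcons sQ /=; lia.
  + by exists (size Q); rewrite ?size_rcons // nth_rcons ltnn eqxx.
Qed.

Lemma derivation_implying_reducts (gs : seq (clause n')) : {subset gs <= G} ->
  exists P, [/\ derivation F P, size P <= 2 * n * size gs &
              forall g, g \in gs -> implied_by_line P (clause_comp redu g)].
Proof.
elim: gs => [|g gs IH] gsG; first by exists [::]; split => //; exact: derivation_nil.
have [|P [dP sP implP]] := IH; first by move=> h hgs; apply: gsG; rewrite inE hgs orbT.
have [B [dB sB implB]] := derivation_implying_reduct (gsG g (mem_head g gs)).
exists (B ++ P); split; first exact: derivation_cat.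
- by rewrite size_cat mulnS leq_add.
- move=> h; rewrite inE => /predU1P [->|hgs]; first exact: implied_by_line_catr.
  exact: implied_by_line_catl (implP h hgs).
Qed.

End ParityReduction.

Theorem theoremC1 (n n' : nat) (F : cnf n) (G : cnf n') (s : nat) :
  parity_le F G ->
  (exists piG : seq (lclause n'), refutation G piG /\ size piG = s) ->
  exists piF : seq (lclause n), refutation F piF /\ size piF <= 2 * n * size G + s.
Proof.
move=> [redu redF] [piG [refG <-]].
have piG_gt0 : 0 < size piG by case: refG.
have G_gt0 := refutation_size_cnf_gt0 refG.
have [nilF|nilF] := boolP ([::] \in F).
  by exists [:: [::]]; split; [exact: refutation_nil_clause | rewrite /=; lia].
have c0F := mem_nth [::] (parity_red_refutation_size_gt0 redF refG).
have n_gt0 : 0 < n.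
  case: (nth [::] F 0) c0F => [nil_in|l c _]; first by rewrite nil_in in nilF.
  exact: leq_ltn_trans (ltn_ord l.1).
case: (pickP [pred vb : literal n | ([:: vb] \in F) && ([:: (vb.1, ~~ vb.2)] \in F)]).
  move=> [v b] /andP [posF negF].
  exists [:: clause_lc [:: (v, b)]; clause_lc [:: (v, ~~ b)]; [::]].
  by split; [exact: refutation_complementary_units | rewrite /=; nia].
move=> consistent.
have units_consistent v b : [:: (v, b)] \in F -> [:: (v, ~~ b)] \in F -> False.
  by move=> posF negF; have := consistent (v, b); rewrite /= posF negF.
have [P [dP sP implP]] :=
  derivation_implying_reducts redF c0F n_gt0 units_consistent (fun g (gG : g \in G) => gG).
exists (P ++ map (subst_lc redu) piG); split; first exact: (refutation_subst dP implP refG).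
by rewrite size_cat size_map leq_add2r.
Qed.
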